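(* Let $T$ be a linear trellis. If $T$ is nonmergeable and one-to-one, then $T$ is connected and fragment one-to-one. Conversely, if $T$ is almost reduced, connected and fragment one-to-one, then $T$ is nonmergeable and one-to-one.
   Context: Let $\mathbb{F}$ be a finite field and $n\ge1$; indices are taken in $\mathbb{Z}_n$. A trellis $T$ of length $n$ over $\mathbb{F}$ consists of pairwise disjoint finite vertex sets $V_i(T)$, $i\in\mathbb{Z}_n$, and edge sets $E_i(T)\subseteq V_i(T)\times\mathbb{F}\times V_{i+1}(T)$; $(v,\alpha,w)\in E_i(T)$ is an edge from $v$ to $w$ with label $\alpha$. Trellises are trim. $T$ is linear if each $V_i(T)$ is an $\mathbb{F}$-vector space and each $E_i(T)$ a subspace. A path of length $m$ is $v_0\alpha_0v_1\cdots\alpha_{m-1}v_m$ with each $(v_j,\alpha_j,v_{j+1})$ an edge; its label sequence is $\alpha_0\cdots\alpha_{m-1}$. A cycle is a closed path of length $n$ starting in $V_0(T)$; $C(T)$ is the set of label sequences of cycles. $T$ is one-to-one if distinct cycles have distinct label sequences; almost reduced if every vertex lies on a cycle; connected if for any two distinct vertices $v,w$ there is a directed path from $v$ to $w$. $T$ is mergeable if for some $i$ and $v\ne w\in V_i(T)$, identifying $v$ and $w$ yields a trellis representing the same code; otherwise nonmergeable. $T$ is fragment one-to-one if any two distinct paths of length $n$ starting in the same vertex set $V_i(T)$ (for any $i$) have distinct label sequences. *)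

From HB Require Import structures.
From mathcomp Require Import all_boot all_order all_algebra.
Set Implicit Arguments. Unset Strict Implicit. Unset Printing Implicit Defensive.
Import GRing.Theory.
Local Open Scope ring_scope.

(* Vertex set V_i is a
   subset (intended: subspace) of the ambient space 'rV[F]_m; all indices are
   natural numbers read modulo n (so V_i := tV (i %% n)).  Since the levels are
   kept apart by their index, the vertex sets are pairwise disjoint by
   construction: a vertex is a pair (level mod n, vector). *)
Record trellis (F : finFieldType) (n m : nat) := Trellis {
  tV : nat -> pred 'rV[F]_m ;
  tE : nat -> 'rV[F]_m -> F -> 'rV[F]_m -> bool }.

Section Trellis.
Variables (F : finFieldType) (n m : nat) (T : trellis F n m).

Definition vert (i : nat) (v : 'rV[F]_m) : bool := tV T (i %% n)%N v.
Definition edge (i : nat) (v : 'rV[F]_m) (a : F) (w : 'rV[F]_m) : bool :=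
  tE T (i %% n)%N v a w.

Definition well_formed : Prop :=
  forall i v a w, edge i v a w -> vert i v /\ vert i.+1 w.

Definition trim : Prop :=
  (forall i v, vert i v -> exists a w, edge i v a w) /\
  (forall i w, vert i.+1 w -> exists v a, edge i v a w).

Definition linear_trellis : Prop :=
  (forall i, vert i 0 /\
     forall (c : F) v v', vert i v -> vert i v' -> vert i (c *: v + v')) /\
  (forall i, edge i 0 0 0 /\
     forall (c : F) v a w v' a' w', edge i v a w -> edge i v' a' w' ->
       edge i (c *: v + v') (c * a + a') (c *: w + w')).

Definition is_path (i : nat) (vs : seq 'rV[F]_m) (ls : seq F) : Prop :=
  size vs = (size ls).+1 /\
  forall j, (j < size ls)%N ->
    edge (i + j) (nth 0 vs j) (nth 0 ls j) (nth 0 vs j.+1).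

Definition is_cycle (vs : seq 'rV[F]_m) (ls : seq F) : Prop :=
  is_path 0 vs ls /\ size ls = n /\ nth 0 vs 0 = nth 0 vs n.

Definition code (ls : seq F) : Prop := exists vs, is_cycle vs ls.

Definition one_to_one : Prop :=
  forall vs vs' ls, is_cycle vs ls -> is_cycle vs' ls -> vs = vs'.

Definition almost_reduced : Prop :=
  forall i v, vert i v -> exists vs ls, is_cycle vs ls /\ nth 0 vs (i %% n) = v.

Definition connected : Prop :=
  forall i j v w, vert i v -> vert j w ->
    ((i %% n)%N, v) <> ((j %% n)%N, w) ->
    exists vs ls, [/\ is_path i vs ls, nth 0 vs 0 = v,
                      nth 0 vs (size ls) = w & ((i + size ls) %% n = j %% n)%N].

Definition fragment_one_to_one : Prop :=
  forall i vs vs' ls, size ls = n -> is_path i vs ls -> is_path i vs' ls ->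
    vs = vs'.

Definition merge_eq (i : nat) (v w : 'rV[F]_m) (k : nat) (x y : 'rV[F]_m) : Prop :=
  x = y \/ ((k %% n = i %% n)%N /\ ((x = v /\ y = w) \/ (x = w /\ y = v))).

(* code of the trellis obtained from T by identifying v and w in V_i:
   its cycles are n edges e_j = (as_j, ls_j, bs_j) of E_j whose consecutive
   endpoints agree in the merged trellis *)
Definition merged_code (i : nat) (v w : 'rV[F]_m) (ls : seq F) : Prop :=
  size ls = n /\
  exists as_ bs : seq 'rV[F]_m, [/\ size as_ = n, size bs = n &
    forall j, (j < n)%N ->
      edge j (nth 0 as_ j) (nth 0 ls j) (nth 0 bs j) /\
      merge_eq i v w j.+1 (nth 0 bs j) (nth 0 as_ (j.+1 %% n))].

Definition mergeable : Prop :=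
  exists i v w, [/\ vert i v, vert i w, v <> w &
    forall ls, merged_code i v w ls <-> code ls].

Definition nonmergeable : Prop := ~ mergeable.

End Trellis.

From HB Require Import structures.
From mathcomp Require Import all_boot all_order all_algebra.
From mathcomp Require Import zify.
From Stdlib Require Import Classical.
Set Implicit Arguments. Unset Strict Implicit. Unset Printing Implicit Defensive.
Import GRing.Theory.
Local Open Scope ring_scope.

(* Linearity drives everything: walks with equal labels differ by a walk with
   zero labels, and walks of one round (n steps, from level i back to level i)
   can be added and subtracted.  Identifying v and w at level i preserves the
   code exactly when every round walk between v and w can be turned into a
   closed walk with the same labels.
   If T is nonmergeable and one-to-one, a zero-label round walk with distinct
   ends would make its ends mergeable, and a closed one is zero; moreover the
   vertices of a level reachable from 0 in one round and those from which 0 is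
   reachable are two subgroups covering the level, and extending walks
   backwards shows that the first one is the whole level, whence connectedness.
   Conversely, connectedness plus a closed walk through every vertex makes w - v
   reachable from 0 in one round, so two distinct vertices of a level are joined
   by a round walk; merging them would turn it into a closed walk with the same
   labels, against fragment one-to-one-ness. *)

Lemma cover_by_two_subgroups (V : zmodType) (P R K : V -> Prop) :
  (forall x y, P x -> P y -> P (x + y)) ->
  (forall x y, R x -> R y -> R (x - y)) ->
  (forall x y, K x -> K y -> K (x - y)) ->
  (forall x, P x -> R x \/ K x) ->
  (forall x, P x -> R x) \/ (forall x, P x -> K x).
Proof.
move=> PD RB KB PRK.
case: (classic (forall x, P x -> R x)); first by left.
move=> /not_all_ex_not [y nPRy]; have [Py nRy] := imply_to_and _ _ nPRy.
right=> x Px; have Ky : K y by case: (PRK y Py).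
case: (PRK x Px) => // Rx.
case: (PRK _ (PD _ _ Px Py)) => [Rxy|Kxy].
- by case: nRy; have := RB _ _ Rxy Rx; rewrite addrC addKr.
- by have := KB _ _ Kxy Ky; rewrite addrK.
Qed.

Section Walks.
Variables (F : finFieldType) (n m : nat) (T : trellis F n m).
Hypothesis n_gt0 : (0 < n)%N.
Hypothesis wfT : well_formed T.
Hypothesis trimT : trim T.
Hypothesis linT : linear_trellis T.

Implicit Types (i j a b s t k L : nat) (A : nat -> 'rV[F]_m) (l : nat -> F).

(* Only A k for k <= L and l k for k < L are relevant. *)
Definition walk i L A l : Prop :=
  forall k, (k < L)%N -> edge T (i + k) (A k) (l k) (A k.+1).

Lemma eq_edge_mod a b : (a = b %[mod n])%N -> edge T a = edge T b.
Proof. by rewrite /edge => ->. Qed.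

Lemma eq_vert_mod a b : (a = b %[mod n])%N -> vert T a = vert T b.
Proof. by rewrite /vert => ->. Qed.

Lemma vert0 i : vert T i 0.
Proof. exact: (linT.1 i).1. Qed.

Lemma vertD i x y : vert T i x -> vert T i y -> vert T i (x + y).
Proof. by move=> vx vy; have := (linT.1 i).2 1 x y vx vy; rewrite scale1r. Qed.

Lemma vertB i x y : vert T i x -> vert T i y -> vert T i (x - y).
Proof. by move=> vx vy; have := (linT.1 i).2 (-1) y x vy vx; rewrite scaleN1r addrC. Qed.

Lemma walk_mod a b L A l : (a = b %[mod n])%N -> walk a L A l -> walk b L A l.
Proof.
move=> eab wA k kL; rewrite -(@eq_edge_mod (a + k)) ?wA //.
by rewrite -modnDml eab modnDml.
Qed.

Lemma eq_walk a L A A' l l' :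
  (forall k, (k <= L)%N -> A k = A' k) -> (forall k, (k < L)%N -> l k = l' k) ->
  walk a L A l -> walk a L A' l'.
Proof. by move=> eA el wA k kL; rewrite -eA ?(ltnW kL) // -eA // -el //; exact: wA. Qed.

Lemma walk_lin c a L A A' l l' : walk a L A l -> walk a L A' l' ->
  walk a L (fun k => c *: A k + A' k) (fun k => c * l k + l' k).
Proof. by move=> wA wA' k kL; apply: (linT.2 _).2; [apply: wA | apply: wA']. Qed.

Lemma walkD a L A A' l l' : walk a L A l -> walk a L A' l' ->
  walk a L (fun k => A k + A' k) (fun k => l k + l' k).
Proof.
move=> wA wA'; apply: eq_walk (walk_lin 1 wA wA') => k _; first by rewrite scale1r.
by rewrite mul1r.
Qed.

Lemma walkB a L A A' l l' : walk a L A l -> walk a L A' l' ->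
  walk a L (fun k => A k - A' k) (fun k => l k - l' k).
Proof.
move=> wA wA'; apply: eq_walk (walk_lin (-1) wA' wA) => k _.
  by rewrite scaleN1r addrC.
by rewrite mulN1r addrC.
Qed.

Lemma walk0 a L : walk a L (fun=> 0) (fun=> 0).
Proof. by move=> k _; apply: (linT.2 _).1. Qed.

Lemma walk_cat a L1 L2 A1 A2 l1 l2 :
  walk a L1 A1 l1 -> walk (a + L1) L2 A2 l2 -> A1 L1 = A2 0%N ->
  walk a (L1 + L2) (fun k => if (k <= L1)%N then A1 k else A2 (k - L1)%N)
                   (fun k => if (k < L1)%N then l1 k else l2 (k - L1)%N).
Proof.
move=> wA1 wA2 junction k kL /=; case: (ltnP k L1) => kL1.
  by rewrite (ltnW kL1); exact: wA1.
have := wA2 (k - L1)%N; rewrite -addnA subnKC // -subSn //.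
case: (ltngtP k L1) kL1 => // [_|eqk] _; first by apply; lia.
subst k; by rewrite subnn -junction; apply; lia.
Qed.

Lemma walk_shift a L A l s L' : walk a L A l -> (s + L' <= L)%N ->
  walk (a + s) L' (fun t => A (s + t)%N) (fun t => l (s + t)%N).
Proof. by move=> wA sL t tL'; rewrite -addnA addnS; apply: wA; lia. Qed.

Lemma walk_from_vert a L x : vert T a x ->
  exists A l, [/\ walk a L A l, A 0%N = x & vert T (a + L) (A L)].
Proof.
move=> vx; elim: L => [|L [A [l [wA A0 vAL]]]].
  by exists (fun=> x), (fun=> 0); split; rewrite ?addn0.
have [c [y e]] := trimT.1 _ _ vAL.
exists (fun k => if (k <= L)%N then A k else y), (fun k => if (k < L)%N then l k else c).
split=> [k|//|]; last by rewrite ltnn addnS; exact: (wfT e).2.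
by rewrite ltnS; case: ltngtP => // [ltkL|->] _; [exact: wA | exact: e].
Qed.

Lemma walk_to_vert a L y : vert T (a + L) y ->
  exists A l, walk a L A l /\ A L = y.
Proof.
elim: L y => [|L IH] y vy; first by exists (fun=> y), (fun=> 0).
rewrite addnS in vy; have [x [c e]] := trimT.2 _ _ vy.
have [A [l [wA AL]]] := IH _ (wfT e).1.
exists (fun k => if (k <= L)%N then A k else y), (fun k => if (k < L)%N then l k else c).
split=> [k|]; last by rewrite ltnn.
by rewrite ltnS; case: ltngtP => // [ltkL|->] _; [exact: wA | rewrite AL].
Qed.

Lemma walk_vert0 i L A l : (0 < L)%N -> walk i L A l -> vert T i (A 0%N).
Proof. by move=> L_gt0 wA; have := (wfT (wA 0%N L_gt0)).1; rewrite addn0. Qed.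

Lemma walk_vertn i A l : walk i n A l -> vert T i (A n).
Proof.
move=> wA; have lt_pn : (n.-1 < n)%N by rewrite ltn_predL.
have := (wfT (wA _ lt_pn)).2.
by rewrite -addnS prednK // (@eq_vert_mod _ i) ?modnDr.
Qed.

Lemma path_walk i vs ls : is_path T i vs ls -> walk i (size ls) (nth 0 vs) (nth 0 ls).
Proof. by case. Qed.

Lemma walk_path i L A l : walk i L A l -> is_path T i (mkseq A L.+1) (mkseq l L).
Proof.
move=> wA; rewrite /is_path !size_mkseq; split=> // k kL.
by rewrite (nth_mkseq _ _ kL) !nth_mkseq ?ltnS // ?(ltnW kL) //; exact: wA.
Qed.

(* [rotl i f] reads f from absolute level i on; [rotr i] undoes it on [0, n). *)
Definition rotl (X : Type) i (f : nat -> X) t := f ((i + t) %% n)%N.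
Definition rotr (X : Type) i (f : nat -> X) t := f ((n - i %% n + t) %% n)%N.

Lemma rotlK (X : Type) i (f : nat -> X) t : (t < n)%N -> rotl i (rotr i f) t = f t.
Proof.
move=> tn; rewrite /rotl /rotr modnDmr {2}(divn_eq i n).
have lt_in : (i %% n < n)%N by rewrite ltn_pmod.
have -> : (n - i %% n + (i %/ n * n + i %% n + t) = (i %/ n).+1 * n + t)%N.
  by rewrite mulSn; lia.
by rewrite modnMDl modn_small.
Qed.

Lemma rotrK (X : Type) i (f : nat -> X) t : (t < n)%N -> rotr i (rotl i f) t = f t.
Proof.
move=> tn; rewrite /rotl /rotr modnDmr {1}(divn_eq i n).
have lt_in : (i %% n < n)%N by rewrite ltn_pmod.
have -> : (i %/ n * n + i %% n + (n - i %% n + t) = (i %/ n).+1 * n + t)%N.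
  by rewrite mulSn; lia.
by rewrite modnMDl modn_small.
Qed.

Lemma walk_rot a s A l : walk a n A l -> A n = A 0%N ->
  walk (a + s) n (rotl s A) (rotl s l).
Proof.
move=> wA closed t tn; rewrite /rotl.
have lt_st : ((s + t) %% n < n)%N by rewrite ltn_pmod.
rewrite -(@eq_edge_mod (a + (s + t) %% n)); last by rewrite modnDmr addnA.
have -> : A ((s + t.+1) %% n)%N = A ((s + t) %% n).+1.
  rewrite addnS -[(s + t).+1]addn1 -modnDml addn1.
  case: (ltngtP ((s + t) %% n).+1 n) lt_st => // [lt_n _|eq_n _].
    by rewrite modn_small.
  by rewrite eq_n modnn closed.
exact: wA.
Qed.

Lemma cycle_walk i vs ls : is_cycle T vs ls ->
  walk i n (rotl i (nth 0 vs)) (rotl i (nth 0 ls)).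
Proof.
case=> p [sz closed]; have := path_walk p; rewrite sz => w0.
by have := walk_rot i w0 (esym closed); rewrite add0n.
Qed.

Lemma walk_cycle i A l : walk i n A l -> A n = A 0%N ->
  is_cycle T (mkseq (rotr i A) n.+1) (mkseq (rotr i l) n).
Proof.
move=> wA closed; have := walk_rot (n - i %% n) wA closed.
have le_in : (i %% n <= n)%N by rewrite ltnW // ltn_pmod.
move/(walk_mod (b := 0)); rewrite -modnDml subnKC // modnn mod0n => /(_ erefl) w0.
split; first exact: walk_path.
by rewrite size_mkseq !nth_mkseq // /rotr modnDr addn0.
Qed.

Definition closable i l := exists A, walk i n A l /\ A n = A 0%N.

Lemma code_closable i ls : code T ls -> closable i (rotl i (nth 0 ls)).
Proof.
case=> vs cyc; exists (rotl i (nth 0 vs)); split; first exact: cycle_walk.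
by rewrite /rotl addn0 modnDr.
Qed.

Lemma closable_code i ls : size ls = n -> closable i (rotl i (nth 0 ls)) -> code T ls.
Proof.
move=> sz [A [wA closed]]; exists (mkseq (rotr i A) n.+1).
suff -> : ls = mkseq (rotr i (rotl i (nth 0 ls))) n by exact: walk_cycle.
apply: (@eq_from_nth _ 0) => [|t]; rewrite ?size_mkseq // sz => tn.
by rewrite nth_mkseq ?rotrK.
Qed.

Lemma code_merged_code i v w ls : code T ls -> merged_code T i v w ls.
Proof.
case=> vs [[_ p] [sz closed]]; split=> //.
exists (mkseq (nth 0 vs) n), (mkseq (fun k => nth 0 vs k.+1) n).
split; rewrite ?size_mkseq // => j jn.
rewrite !nth_mkseq ?ltn_pmod //; split; first by have := p j; rewrite sz; apply.
left; case: (ltngtP j.+1 n) jn => // [lt_jn|eq_jn] _; first by rewrite modn_small.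
by rewrite eq_jn modnn closed.
Qed.

Lemma merged_code_walk i v w ls : merged_code T i v w ls ->
  size ls = n /\ exists A, walk i n A (rotl i (nth 0 ls)) /\
    [\/ A n = A 0%N, A 0%N = v /\ A n = w | A 0%N = w /\ A n = v].
Proof.
move=> [sz [as_ [bs [_ _ H]]]]; split=> //.
pose last_edge := ((i + n.-1) %% n)%N.
exists (fun t => if (t < n)%N then rotl i (nth 0 as_) t else nth 0 bs last_edge).
split=> [t tn|].
- have lt_jn : ((i + t) %% n < n)%N by rewrite ltn_pmod.
  have [e me] := H _ lt_jn; rewrite tn /rotl.
  rewrite (@eq_edge_mod _ ((i + t) %% n)%N); last by rewrite modn_mod.
  have succ_j : (((i + t) %% n).+1 %% n = (i + t.+1) %% n)%N.
    by rewrite -[_.+1]addn1 modnDml addn1 addnS.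
  case: (ltngtP t.+1 n) tn => // [lt_tn|eq_tn] _; last first.
    by have -> : last_edge = ((i + t) %% n)%N by rewrite /last_edge -eq_tn.
  rewrite succ_j in me; case: me => [<-|[eq_i _]] //; exfalso.
  move: eq_i; rewrite succ_j -[in X in (_ = X %% _)%N](addn0 i) => /eqP.
  by rewrite eqn_modDl mod0n modn_small // => /eqP.
- have lt_jn : (last_edge < n)%N by rewrite ltn_pmod.
  have [_] := H _ lt_jn; rewrite ltnn n_gt0 /rotl addn0.
  have -> : (last_edge.+1 %% n = i %% n)%N.
    by rewrite -[_.+1]addn1 modnDml addn1 -addnS prednK // modnDr.
  by case=> [->|[_ [[-> ->]|[-> ->]]]]; [constructor 1 | constructor 3 | constructor 2].
Qed.

Lemma walk_merged_code i A l : walk i n A l ->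
  merged_code T i (A 0%N) (A n) (mkseq (rotr i l) n).
Proof.
move=> wA; split; first by rewrite size_mkseq.
exists (mkseq (rotr i A) n), (mkseq (rotr i (fun k => A k.+1)) n).
split; rewrite ?size_mkseq // => j jn; rewrite !nth_mkseq ?ltn_pmod //.
set t := ((n - i %% n + j) %% n)%N.
have lt_tn : (t < n)%N by rewrite ltn_pmod.
have level_t : (i + t = j %[mod n])%N by rewrite (modn_small jn); exact: (rotrK i id jn).
split; first by rewrite /rotr -/t (@eq_edge_mod _ (i + t)) //; exact: wA.
have succ_t : ((n - i %% n + j.+1 %% n) %% n = t.+1 %% n)%N.
  by rewrite modnDmr addnS /t -[in RHS]addn1 modnDml addn1.
rewrite /merge_eq /rotr -/t succ_t; case: (ltngtP t.+1 n) lt_tn => // [lt_tn|eq_tn] _.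
  by left; rewrite modn_small.
right; split; last by right; rewrite eq_tn modnn.
by rewrite -addn1 -modnDml -level_t modnDml addn1 -addnS eq_tn modnDr.
Qed.

Lemma mergeable_of_closable i v w : vert T i v -> vert T i w -> v <> w ->
  (forall A l, walk i n A l -> (A 0%N = v /\ A n = w) \/ (A 0%N = w /\ A n = v) ->
     closable i l) ->
  mergeable T.
Proof.
move=> vv vw neq_vw fix_open; exists i, v, w; split=> // ls.
split; last exact: code_merged_code.
case/merged_code_walk=> sz [A [wA ends]]; apply: (closable_code sz).
by case: ends => [closed|ends|ends]; [exists A | apply: (fix_open A)..]; auto.
Qed.

Lemma fragment_walk_uniq : fragment_one_to_one T ->
  forall i A A' l k, walk i n A l -> walk i n A' l -> (k <= n)%N -> A k = A' k.
Proof.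
move=> frag i A A' l k wA wA' kn.
have := frag i _ _ _ (size_mkseq l n) (walk_path wA) (walk_path wA').
by move/(congr1 (nth 0 ^~ k)); rewrite !nth_mkseq.
Qed.

Lemma fragment_of_walk_uniq :
  (forall i A A' l k, walk i n A l -> walk i n A' l -> (k <= n)%N -> A k = A' k) ->
  fragment_one_to_one T.
Proof.
move=> uniq i vs vs' ls sz p p'; have [sz_vs _] := p; have [sz_vs' _] := p'.
have := path_walk p; have := path_walk p'; rewrite sz => wA' wA.
apply: (@eq_from_nth _ 0) => [|k]; first by rewrite sz_vs sz_vs'.
by rewrite sz_vs sz ltnS; exact: uniq wA wA'.
Qed.

Lemma zero_label_walk : nonmergeable T -> one_to_one T ->
  forall i D k, walk i n D (fun=> 0) -> (k <= n)%N -> D k = 0.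
Proof.
move=> nmT injT i D k wD kn; have [closed|open] := eqVneq (D n) (D 0%N).
  have eq_cyc := injT _ _ _ (walk_cycle wD closed) (walk_cycle (@walk0 i n) erefl).
  suff D0 t : (t < n)%N -> D t = 0.
    by move: kn; rewrite leq_eqVlt => /orP[/eqP->|]; [rewrite closed; apply: D0 | apply: D0].
  move=> tn; move/(congr1 (nth 0 ^~ ((i + t) %% n)%N)): eq_cyc.
  by rewrite !nth_mkseq ?ltnS 1?ltnW ?ltn_pmod // -!/(rotl i _ t) !rotlK.
(* Otherwise the ends of D can be merged: adding or subtracting D closes any
   round walk between them. *)
case: nmT; apply: (mergeable_of_closable (walk_vert0 n_gt0 wD) (walk_vertn wD)).
  by apply/eqP; rewrite eq_sym.
move=> A l wA [[A0 An]|[A0 An]].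
- exists (fun k => A k - D k); split; last by rewrite A0 An !subrr.
  by apply: eq_walk (walkB wA wD) => // t _; rewrite subr0.
- exists (fun k => A k + D k); split; last by rewrite A0 An addrC.
  by apply: eq_walk (walkD wA wD) => // t _; rewrite addr0.
Qed.

Lemma nonmergeable_fragment_one_to_one :
  nonmergeable T -> one_to_one T -> fragment_one_to_one T.
Proof.
move=> nmT injT; apply: fragment_of_walk_uniq => i A A' l k wA wA' kn.
apply/eqP; rewrite -subr_eq0; apply/eqP.
apply: (zero_label_walk nmT injT (D := fun k => A k - A' k) _ kn).
by apply: eq_walk (walkB wA wA') => // t _; rewrite subrr.
Qed.

Definition round_reach i x y :=
  exists A l, [/\ walk i n A l, A 0%N = x & A n = y].

Lemma round_reach00 i : round_reach i 0 0.
Proof. by exists (fun=> 0), (fun=> 0); split=> //; exact: walk0. Qed.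

Lemma round_reachD i x y x' y' : round_reach i x y -> round_reach i x' y' ->
  round_reach i (x + x') (y + y').
Proof.
move=> [A [l [wA <- <-]]] [A' [l' [wA' <- <-]]].
by exists (fun k => A k + A' k), (fun k => l k + l' k); split=> //; exact: walkD.
Qed.

Lemma round_reachB i x y x' y' : round_reach i x y -> round_reach i x' y' ->
  round_reach i (x - x') (y - y').
Proof.
move=> [A [l [wA <- <-]]] [A' [l' [wA' <- <-]]].
by exists (fun k => A k - A' k), (fun k => l k - l' k); split=> //; exact: walkB.
Qed.

Lemma round_reach_from0_or_to0 i x : nonmergeable T -> vert T i x ->
  round_reach i 0 x \/ round_reach i x 0.
Proof.
move=> nmT vx; apply: NNPP => /not_or_and [not_from0 not_to0]; apply: nmT.
apply: (mergeable_of_closable (vert0 i) vx).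
  by move=> x0; apply: not_from0; rewrite -x0; exact: round_reach00.
by move=> A l wA [[A0 An]|[A0 An]]; [case: not_from0 | case: not_to0]; exists A, l.
Qed.

Lemma round_reach_from0 i x : nonmergeable T -> vert T i x -> round_reach i 0 x.
Proof.
move=> nmT vx.
have [from0|to0] : (forall y, vert T i y -> round_reach i 0 y) \/
                   (forall y, vert T i y -> round_reach i y 0).
  apply: cover_by_two_subgroups => [y z vy vz|y z ry rz|y z ry rz|y].
  - exact: vertD.
  - by have := round_reachB ry rz; rewrite subr0.
  - by have := round_reachB ry rz; rewrite subr0.
  - exact: round_reach_from0_or_to0.
  exact: from0.
(* every vertex of level i ends a round walk, whose start leads to 0 *)
have vx' : vert T (i + n) x by rewrite (@eq_vert_mod _ i) ?modnDr.
have [A [l [wA An]]] := walk_to_vert vx'.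
have reach_x : round_reach i (A 0%N) x by exists A, l.
by have := round_reachB reach_x (to0 _ (walk_vert0 n_gt0 wA)); rewrite subrr subr0.
Qed.

Lemma round_reach_between i u w : nonmergeable T -> vert T i u -> vert T i w ->
  round_reach i u w.
Proof.
move=> nmT vu vw; have [Q [lq [wQ Q0 _]]] := @walk_from_vert i n u vu.
have reach_Q : round_reach i u (Q n) by exists Q, lq.
have := round_reachD reach_Q (round_reach_from0 nmT (vertB vw (walk_vertn wQ))).
by rewrite addr0 addrC subrK.
Qed.

Lemma nonmergeable_connected : nonmergeable T -> connected T.
Proof.
move=> nmT i j v w vv vw _.
pose d := (j %% n + (n - i %% n))%N.
have level_d : (i + d = j %[mod n])%N.
  have le_in : (i %% n <= n)%N by rewrite ltnW // ltn_pmod.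
  by rewrite /d -modnDml addnCA subnKC // modnDr modn_mod.
have [P [lp [wP P0 vPd]]] := walk_from_vert d vv.
have vw' : vert T (i + d) w by rewrite (eq_vert_mod level_d).
have [Q [lq [wQ Q0 Qn]]] := round_reach_between nmT vPd vw'.
have wC := walk_cat wP wQ (esym Q0).
do 2 eexists; split; first exact: walk_path wC.
- by rewrite nth_mkseq.
- by rewrite size_mkseq nth_mkseq // ifF ?addKn //; lia.
- by rewrite size_mkseq addnA -modnDml level_d modnDml modnDr.
Qed.

Lemma round_reach_closed i x : almost_reduced T -> vert T i x -> round_reach i x x.
Proof.
move=> arT vx; have [vs [ls [cyc at_i]]] := arT _ _ vx.
exists (rotl i (nth 0 vs)), (rotl i (nth 0 ls)).
by split; [exact: cycle_walk | rewrite /rotl addn0 | rewrite /rotl modnDr].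
Qed.

Lemma round_reach_trans i u w : almost_reduced T ->
  round_reach i 0 u -> round_reach i u w -> round_reach i 0 w.
Proof.
move=> arT from0 reach_uw; have [A [l [wA A0 _]]] := reach_uw.
have loop := round_reach_closed arT (walk_vert0 n_gt0 wA); rewrite A0 in loop.
by have := round_reachD (round_reachB reach_uw loop) from0; rewrite subrr add0r subrK.
Qed.

Lemma connected_round_reach i v w : almost_reduced T -> connected T ->
  vert T i v -> vert T i w -> v <> w -> round_reach i 0 (w - v).
Proof.
move=> arT cnT vv vw neq_vw.
have neq : ((i %% n)%N, 0) <> ((i %% n)%N, w - v).
  by case=> /eqP; rewrite eq_sym subr_eq0 => /eqP/esym.
have [vs [ls [p s0 sL level]]] := cnT _ _ _ _ (vert0 i) (vertB vw vv) neq.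
have wA := path_walk p; set L := size ls in wA sL level.
have dvd_nL : (n %| L)%N.
  by move: level => /eqP; rewrite -[in X in (_ == X %[mod _])%N](addn0 i) eqn_modDl mod0n.
suff reach_k k : (k * n <= L)%N -> round_reach i 0 (nth 0 vs (k * n)%N).
  by have := reach_k (L %/ n)%N; rewrite divnK // sL; apply.
elim: k => [_|k IH le_kL]; first by rewrite mul0n s0; exact: round_reach00.
have le_kL' : (k * n + n <= L)%N by rewrite addnC -mulSn.
apply: (round_reach_trans arT (IH (leq_trans (leq_addr _ _) le_kL'))).
exists (fun t => nth 0 vs (k * n + t)%N), (fun t => nth 0 ls (k * n + t)%N).
split; [|by rewrite addn0|by rewrite mulSn addnC].
by apply: walk_mod (walk_shift wA le_kL'); rewrite addnC modnMDl.
Qed.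

Lemma connected_nonmergeable : almost_reduced T -> connected T ->
  fragment_one_to_one T -> nonmergeable T.
Proof.
move=> arT cnT frag [i [v [w [vv vw neq_vw merge]]]].
have [P [l [wP P0 Pn]]] :=
  round_reachD (round_reach_closed arT vv) (connected_round_reach arT cnT vv vw neq_vw).
rewrite addr0 in P0; rewrite addrC subrK in Pn; subst v w.
(* P is a cycle of the merged trellis, so T has a closed walk with its labels. *)
have [A [wA closed]] := code_closable i ((merge _).1 (walk_merged_code wP)).
have wA' : walk i n A l.
  apply: eq_walk wA => // t tn.
  by rewrite /rotl nth_mkseq ?ltn_pmod // -/(rotl i (rotr i l) t) rotlK.
have same := fragment_walk_uniq frag wP wA'.
by apply: neq_vw; rewrite !same // closed.
Qed.

Lemma fragment_one_to_one_cycles : fragment_one_to_one T -> one_to_one T.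
Proof. by move=> frag vs vs' ls [p [sz _]] [p' _]; exact: frag p p'. Qed.

End Walks.

Unset Implicit Arguments.

Theorem mainTheorem14 (F : finFieldType) (n m : nat) (T : trellis F n m) :
  (0 < n)%N -> well_formed T -> trim T -> linear_trellis T ->
  ((nonmergeable T /\ one_to_one T) ->
     connected T /\ fragment_one_to_one T) /\
  ((almost_reduced T /\ connected T /\ fragment_one_to_one T) ->
     nonmergeable T /\ one_to_one T).
Proof.
move=> n_gt0 wfT trimT linT; split.
  case=> nmT injT; split; first exact: nonmergeable_connected.
  exact: nonmergeable_fragment_one_to_one.
case=> arT [cnT frag]; split; first exact: connected_nonmergeable.
exact: fragment_one_to_one_cycles.
Qed.
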